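(* Suppose Assumption 1 holds with parameters $\varepsilon,\alpha\in[1,\infty],k_1$ and a supergradient $g'(x^* )$ that moreover satisfies $g'(x^* )>0$. Then in the asymptotic regime there exist constants $K>0$ and $c_0$ (independent of $c$) such that for every $c\ge c_0$ there is a two-price policy with performance loss at most $K\,c^{1/(\alpha+1)}(\log c)^2$ if $\alpha\in[1,\infty)$, i.e. $\tilde O(c^{1/(\alpha+1)})$, and at most $K(\log c)^2$ if $\alpha=\infty$.
   Context: Setting. Fix $c\in\mathbb N$ (number of identical units of a single reusable resource), an arrival rate $\lambda>0$ and a mean usage duration $d>0$, with $x^*:=c/(\lambda d)\in(0,1)$. Let $g:[0,1]\to\mathbb R$ be concave, non-decreasing, with $g(0)=0$ (the reward function). A stock-dependent policy is a vector $\mathbf x=(x_1,\dots,x_c)\in[0,1]^c$, where $x_j$ is the admission probability used when exactly $j$ units are available (the admission probability is $0$ when no unit is available). Its steady-state distribution is the unique probability vector $\pi=(\pi_0,\dots,\pi_c)$ satisfying $\pi_j\lambda x_j=\pi_{j-1}(c-j+1)/d$ for all $j\in\{1,\dots,c\}$, and its long-run average reward is $\mathcal R(\mathbf x)=\sum_{j=1}^c\pi_j\lambda g(x_j)$. The performance loss of $\mathbf x$ is $\lambda g(x^* )-\mathcal R(\mathbf x)$. A two-price policy with parameters $x_L,x_H\in[0,1]$ and $\tau\in\{1,\dots,c\}$ sets $x_j=x_L$ for $1\le j\le\tau$ and $x_j=x_H$ for $\tau<j\le c$. Asymptotic regime: $x^*\in(0,1)$, $d$ and $g$ are fixed, $c\to\infty$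 and $\lambda=c/(x^*d)$. Assumption 1: there exist $0<\varepsilon<\min\{x^*,1-x^*\}$, $\alpha\in[1,\infty]$, $k_1\ge0$ and a supergradient $g'(x^* )\ge0$ of $g$ at $x^*$ such that $g(x)\ge g(x^* )+g'(x^* )(x-x^* )-k_1|x-x^*|^\alpha$ for all $x\in[x^*-\varepsilon,x^*+\varepsilon]$ (when $\alpha=\infty$, the term $|x-x^*|^\alpha$ is interpreted as $0$). *)

From Stdlib Require Import Reals Lra.
Open Scope R_scope.

Fixpoint sum1 (f : nat -> R) (n : nat) : R :=
  match n with
  | O => 0
  | S k => sum1 f k + f (S k)
  end.

(* y^a for y >= 0 and a >= 1, with 0^a = 0 *)
Definition rpow0 (y a : R) : R := if Req_EM_T y 0 then 0 else Rpower y a.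

(* alpha in [1, infinity]: [Some a] is a finite alpha = a, [None] is alpha = infinity *)
Definition alpha_ok (alpha : option R) : Prop :=
  match alpha with Some a => 1 <= a | None => True end.

(* k1 |x - x*|^alpha, interpreted as 0 when alpha = infinity *)
Definition penalty (alpha : option R) (k1 y : R) : R :=
  match alpha with Some a => k1 * rpow0 (Rabs y) a | None => 0 end.

Definition concave_on01 (g : R -> R) : Prop :=
  forall x y t, 0 <= x <= 1 -> 0 <= y <= 1 -> 0 <= t <= 1 ->
    t * g x + (1 - t) * g y <= g (t * x + (1 - t) * y).

Definition nondecr_on01 (g : R -> R) : Prop :=
  forall x y, 0 <= x <= 1 -> 0 <= y <= 1 -> x <= y -> g x <= g y.

Definition assumption1 (g : R -> R) (xs eps : R) (alpha : option R) (k1 gp : R) : Prop :=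
  0 < eps /\ eps < Rmin xs (1 - xs) /\ alpha_ok alpha /\ 0 <= k1 /\ 0 <= gp /\
  (forall y, 0 <= y <= 1 -> g y <= g xs + gp * (y - xs)) /\
  (forall x, xs - eps <= x <= xs + eps ->
     g xs + gp * (x - xs) - penalty alpha k1 (x - xs) <= g x).

(* stock-dependent policy x_1..x_c with values in [0,1] *)
Definition policy (c : nat) (x : nat -> R) : Prop :=
  forall j, (1 <= j <= c)%nat -> 0 <= x j <= 1.

Definition two_price (c : nat) (x : nat -> R) : Prop :=
  exists xL xH (tau : nat), 0 <= xL <= 1 /\ 0 <= xH <= 1 /\ (1 <= tau <= c)%nat /\
    forall j, (1 <= j <= c)%nat -> x j = if Nat.leb j tau then xL else xH.

Definition steady_state (c : nat) (lam d : R) (x : nat -> R) (pi : nat -> R) : Prop :=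
  (forall j, (j <= c)%nat -> 0 <= pi j) /\
  pi O + sum1 pi c = 1 /\
  (forall j, (1 <= j <= c)%nat ->
     pi j * lam * x j = pi (j - 1)%nat * (INR c - INR j + 1) / d).

Definition avg_reward (c : nat) (lam : R) (g : R -> R) (x pi : nat -> R) : R :=
  sum1 (fun j => pi j * lam * g (x j)) c.

Definition perf_loss (c : nat) (lam : R) (g : R -> R) (xs : R) (x pi : nat -> R) : R :=
  lam * g xs - avg_reward c lam g x pi.

Definition loss_bound (alpha : option R) (K : R) (c : nat) : R :=
  match alpha with
  | Some a => K * Rpower (INR c) (1 / (a + 1)) * (ln (INR c)) ^ 2
  | None => K * (ln (INR c)) ^ 2
  end.

From Stdlib Require Import Reals Lra Lia Arith ZArith.
Open Scope R_scope.

(* Let [lam = c / (xs d)].  For a relative spread [dl] and a threshold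
   [tau = ceil (2 ln c / dl)], consider the two-price policy that admits with
   probability [xs (1 - dl)] at stock levels [<= tau] and [xs (1 + dl)] above.
   Its stationary distribution [pi] is a birth-death distribution:
   - below [tau] it decays geometrically towards stock 0, so [pi 0 <= 1 / c];
   - above [tau] it decays geometrically towards stock [c], so the mean idle
     stock satisfies [E J <= tau + 1 / dl].
   By Little's law the throughput is [(c - E J) / d], and the linear lower bound
   of Assumption 1 turns this into a loss of at most
     [g xs / (xs d) + lam * k1 (xs dl)^alpha + g'(xs) / d * (tau + 1 / dl)].
   Finally [dl = (4 ln c / c)^(1/(alpha+1))] (a constant if [alpha = oo])
   makes every term [O(c^(1/(alpha+1)) (ln c)^2)]. *)

Lemma sum1_ext f h n :
  (forall j, (1 <= j <= n)%nat -> f j = h j) -> sum1 f n = sum1 h n.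
Proof.
  induction n as [|n IH]; intros H; simpl; auto.
  rewrite IH, H; auto; [lia | intros; apply H; lia].
Qed.

Lemma sum1_le f h n :
  (forall j, (1 <= j <= n)%nat -> f j <= h j) -> sum1 f n <= sum1 h n.
Proof.
  induction n as [|n IH]; intros H; simpl; [lra|].
  assert (sum1 f n <= sum1 h n) by (apply IH; intros; apply H; lia).
  assert (f (S n) <= h (S n)) by (apply H; lia).
  lra.
Qed.

Lemma sum1_lin a b f h n :
  sum1 (fun j => a * f j + b * h j) n = a * sum1 f n + b * sum1 h n.
Proof. induction n as [|n IH]; simpl; [ring|]. rewrite IH; ring. Qed.

Lemma sum1_scal a f n : sum1 (fun j => a * f j) n = a * sum1 f n.
Proof. induction n as [|n IH]; simpl; [ring|]. rewrite IH; ring. Qed.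

Lemma sum1_shift f n : sum1 (fun j => f (j - 1)%nat) n = f 0%nat + sum1 f n - f n.
Proof. induction n as [|n IH]; simpl; [ring|]. rewrite IH, Nat.sub_0_r; ring. Qed.

Lemma sum1_nonneg f n : (forall j, (1 <= j <= n)%nat -> 0 <= f j) -> 0 <= sum1 f n.
Proof.
  intros H. apply Rle_trans with (sum1 (fun _ => 0) n).
  - clear H; induction n; simpl; lra.
  - apply sum1_le; auto.
Qed.

Lemma sum1_ge_term f n j :
  (forall i, (1 <= i <= n)%nat -> 0 <= f i) -> (1 <= j <= n)%nat -> f j <= sum1 f n.
Proof.
  induction n as [|n IH]; intros H Hj; [lia|]. simpl.
  assert (0 <= sum1 f n) by (apply sum1_nonneg; intros; apply H; lia).
  destruct (Nat.eq_dec j (S n)) as [->|Hne]; [lra|].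
  assert (f j <= sum1 f n) by (apply IH; [intros; apply H | ]; lia).
  assert (0 <= f (S n)) by (apply H; lia).
  lra.
Qed.

Lemma exp_le x y : x <= y -> exp x <= exp y.
Proof. intros [H|<-]; [left; apply exp_increasing; auto | lra]. Qed.

Lemma ln_le_mono x y : 0 < x -> x <= y -> ln x <= ln y.
Proof. intros Hx [H|<-]; [left; apply ln_increasing; auto | lra]. Qed.

Lemma exp_pow x n : exp x ^ n = exp (INR n * x).
Proof.
  induction n as [|n IH]; simpl pow; [simpl; rewrite Rmult_0_l, exp_0; auto|].
  rewrite IH, S_INR, <- exp_plus. f_equal; ring.
Qed.

Lemma nat_ceil r : 0 <= r -> exists n : nat, r < INR n <= r + 1.
Proof.
  intros Hr. destruct (archimed r) as [H1 H2].
  assert (0 < up r)%Z by (apply lt_0_IZR; lra).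
  exists (Z.to_nat (up r)). rewrite INR_IZR_INZ, Z2Nat.id by lia. lra.
Qed.

(* [ln C >= 1] from [C >= 3 >= e]; makes [ln c] and [(ln c)^2] dominate constants. *)
Lemma ln_ge1 C : 3 <= C -> 1 <= ln C.
Proof.
  intros H. rewrite <- (ln_exp 1). apply ln_le_mono; [apply exp_pos|].
  pose proof exp_le_3. lra.
Qed.

Lemma ln_le_2sqrt C : 1 <= C -> ln C <= 2 * sqrt C.
Proof.
  intros H. assert (Hs : 0 < sqrt C) by (apply sqrt_lt_R0; lra).
  rewrite <- (sqrt_sqrt C) at 1 by lra. rewrite ln_mult by auto.
  pose proof (exp_ineq1_le (ln (sqrt C))) as He. rewrite exp_ln in He by auto. lra.
Qed.

Lemma log_ratio_small m C :
  0 < m -> Rmax 3 ((8 / m) ^ 2) <= C -> 3 <= C /\ 4 * ln C / C <= m.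
Proof.
  intros Hm H. pose proof (Rmax_l 3 ((8 / m) ^ 2)). pose proof (Rmax_r 3 ((8 / m) ^ 2)).
  split; [lra|].
  assert (Hs : 8 / m <= sqrt C).
  { rewrite <- (sqrt_pow2 (8 / m)); [apply sqrt_le_1_alt; lra|].
    left; apply Rdiv_lt_0_compat; lra. }
  assert (HsC := sqrt_sqrt C ltac:(lra)).
  assert (HL := ln_le_2sqrt C ltac:(lra)).
  assert (8 <= m * sqrt C).
  { apply (Rmult_le_reg_r (/ m)); [apply Rinv_0_lt_compat; lra|].
    replace (m * sqrt C * / m) with (sqrt C) by (field; lra). lra. }
  apply (Rmult_le_reg_r C); [lra|].
  replace (4 * ln C / C * C) with (4 * ln C) by (field; lra). nra.
Qed.

Lemma Rpower_le_small_base u e f : 0 < u <= 1 -> e <= f -> Rpower u f <= Rpower u e.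
Proof.
  intros Hu Hef. unfold Rpower. apply exp_le.
  assert (ln u <= 0) by (rewrite <- ln_1; apply ln_le_mono; lra). nra.
Qed.

Lemma Rpower_inv_base u e : 0 < u -> Rpower (/ u) e = / Rpower u e.
Proof. intros Hu. unfold Rpower. rewrite ln_Rinv, <- exp_Ropp by auto. f_equal; ring. Qed.

(* Unnormalised product-form weights of the birth-death chain of a policy [x];
   normalising them gives a steady state whenever all [x j > 0]. *)
Fixpoint product_weight (c : nat) (lam d : R) (x : nat -> R) (j : nat) : R :=
  match j with
  | O => 1
  | S k => product_weight c lam d x k * (INR c - INR (S k) + 1) / (d * lam * x (S k))
  end.

Lemma product_weight_pos c lam d x j :
  0 < lam -> 0 < d -> (forall i, (1 <= i <= c)%nat -> 0 < x i) ->
  (j <= c)%nat -> 0 < product_weight c lam d x j.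
Proof.
  intros Hl Hd Hx. induction j as [|j IH]; intros Hj; cbn [product_weight]; [lra|].
  assert (0 < x (S j)) by (apply Hx; lia).
  assert (INR (S j) <= INR c) by (apply le_INR; lia).
  assert (0 < product_weight c lam d x j) by (apply IH; lia).
  apply Rdiv_lt_0_compat.
  - apply Rmult_lt_0_compat; lra.
  - apply Rmult_lt_0_compat; [apply Rmult_lt_0_compat|]; auto.
Qed.

Lemma steady_state_exists c lam d x :
  0 < lam -> 0 < d -> (forall j, (1 <= j <= c)%nat -> 0 < x j) ->
  exists pi, steady_state c lam d x pi.
Proof.
  intros Hl Hd Hx. set (w := product_weight c lam d x).
  set (Z := w 0%nat + sum1 w c).
  assert (HZ : 0 < Z).
  { assert (0 <= sum1 w c)
      by (apply sum1_nonneg; intros; left; apply product_weight_pos; auto; lia).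
    unfold Z; replace (w 0%nat) with 1 by reflexivity; lra. }
  exists (fun j => / Z * w j). repeat split.
  - intros j Hj. apply Rmult_le_pos; [left; apply Rinv_0_lt_compat; auto|].
    left; apply product_weight_pos; auto.
  - rewrite sum1_scal, <- Rmult_plus_distr_l. fold Z. field. lra.
  - intros j Hj. destruct j as [|k]; [lia|]. unfold w; cbn [product_weight].
    replace (S k - 1)%nat with k by lia.
    assert (0 < x (S k)) by (apply Hx; lia).
    field. repeat split; lra.
Qed.

Lemma steady_state_le_1 c lam d x pi j :
  steady_state c lam d x pi -> (j <= c)%nat -> pi j <= 1.
Proof.
  intros [Hpos [Hsum _]] Hj.
  assert (0 <= pi 0%nat) by (apply Hpos; lia).
  assert (0 <= sum1 pi c) by (apply sum1_nonneg; intros; apply Hpos; lia).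
  destruct j as [|j]; [lra|].
  assert (pi (S j) <= sum1 pi c) by (apply sum1_ge_term; [intros; apply Hpos|]; lia).
  lra.
Qed.

Lemma geometric_decay (pi : nat -> R) q tau :
  0 <= q -> (forall j, (1 <= j <= tau)%nat -> pi (j - 1)%nat <= q * pi j) ->
  pi 0%nat <= q ^ tau * pi tau.
Proof.
  intros Hq H.
  enough (Hk : forall k, (k <= tau)%nat -> pi 0%nat <= q ^ k * pi k) by (apply Hk; lia).
  induction k as [|k IH]; intros Hk; simpl; [lra|].
  assert (A := H (S k) ltac:(lia)). simpl in A; rewrite Nat.sub_0_r in A.
  assert (0 <= q ^ k) by (apply pow_le; auto).
  apply Rle_trans with (q ^ k * pi k); [apply IH; lia|].
  replace (q * q ^ k * pi (S k)) with (q ^ k * (q * pi (S k))) by ring.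
  apply Rmult_le_compat_l; auto.
Qed.

Lemma excess_tail_bound c tau dl pi :
  0 < dl -> (forall j, (j <= c)%nat -> 0 <= pi j) -> pi 0%nat + sum1 pi c = 1 ->
  (forall j, (tau < j <= c)%nat -> (1 + dl) * pi j <= pi (j - 1)%nat) ->
  sum1 (fun j => Rmax 0 (INR j - INR tau) * pi j) c <= / dl.
Proof.
  intros Hdl Hpos Hsum Hhi.
  set (h := fun j => Rmax 0 (INR j - INR tau)).
  assert (Hh0 : forall j, 0 <= h j) by (intros; apply Rmax_l).
  assert (Hstep : forall j, (1 <= j <= c)%nat ->
            (1 + dl) * (h j * pi j) <= 1 * (h (j - 1)%nat * pi (j - 1)%nat) + 1 * pi (j - 1)%nat).
  { intros j Hj. assert (0 <= pi (j - 1)%nat) by (apply Hpos; lia).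
    assert (0 <= h (j - 1)%nat) by auto.
    destruct (le_lt_dec j tau) as [Hle|Hlt].
    - unfold h at 1. rewrite Rmax_left by (apply le_INR in Hle; lra). nra.
    - assert (E : INR (j - 1) = INR j - 1) by (rewrite minus_INR by lia; simpl; ring).
      assert (INR tau <= INR (j - 1)) by (apply le_INR; lia).
      assert (A := Hhi j ltac:(lia)).
      unfold h. rewrite !Rmax_right by lra. rewrite E. nra. }
  apply sum1_le in Hstep.
  rewrite sum1_lin, (sum1_shift (fun i => h i * pi i)), (sum1_shift pi), sum1_scal in Hstep.
  assert (h 0%nat = 0) by (unfold h; simpl; apply Rmax_left; pose proof (pos_INR tau); lra).
  assert (0 <= h c * pi c) by (apply Rmult_le_pos; auto).
  assert (0 <= pi c) by auto.
  set (Hs := sum1 (fun j => h j * pi j) c) in *.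
  change (Hs <= / dl). rewrite H, Rmult_0_l in Hstep.
  apply (Rmult_le_reg_l dl); [auto|]. rewrite Rinv_r by lra. lra.
Qed.

Lemma steady_state_balance c xs d x pi j :
  0 < xs -> 0 < d -> steady_state c (INR c / (xs * d)) d x pi -> (1 <= j <= c)%nat ->
  pi j * INR c * (x j / xs) = pi (j - 1)%nat * (INR c - INR j + 1).
Proof.
  intros Hxs Hd [_ [_ Hbal]] Hj.
  replace (pi j * INR c * (x j / xs)) with (d * (pi j * (INR c / (xs * d)) * x j))
    by (field; lra).
  rewrite Hbal by auto. field. lra.
Qed.

(* Throughput = expected number of busy units / mean usage time (Little's law). *)
Lemma throughput_identity c lam d x pi :
  0 < d -> steady_state c lam d x pi ->
  sum1 (fun j => pi j * lam * x j) c = (INR c - sum1 (fun j => INR j * pi j) c) / d.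
Proof.
  intros Hd [_ [Hsum Hbal]].
  rewrite (sum1_ext _ (fun j => / d * (fun i => pi i * (INR c - INR i)) (j - 1)%nat)).
  2:{ intros j Hj. rewrite Hbal by auto. rewrite minus_INR by lia. simpl INR. field. lra. }
  rewrite sum1_scal, (sum1_shift (fun i => pi i * (INR c - INR i))).
  rewrite (sum1_ext _ (fun i => INR c * pi i + (-1) * (INR i * pi i))) by (intros; ring).
  rewrite sum1_lin. simpl INR.
  replace (sum1 pi c) with (1 - pi 0%nat) by lra. field. lra.
Qed.

(* Loss decomposition for an arbitrary policy whose prices satisfy the linear lower
   bound of Assumption 1 up to an error [P]: the loss is paid when the stock is empty,
   through the error [P], and through the expected idle stock [E J]. *)
Lemma loss_decomposition c xs d g gp P x pi :
  0 < xs -> 0 < d -> 0 <= gp -> 0 <= P -> 0 <= g xs ->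
  steady_state c (INR c / (xs * d)) d x pi ->
  (forall j, (1 <= j <= c)%nat -> g xs + gp * (x j - xs) - P <= g (x j)) ->
  perf_loss c (INR c / (xs * d)) g xs x pi <=
    INR c / (xs * d) * g xs * pi 0%nat + INR c / (xs * d) * P
    + gp / d * sum1 (fun j => INR j * pi j) c.
Proof.
  intros Hxs Hd Hgp HP Hg Hss Hlin.
  set (lam := INR c / (xs * d)) in *.
  assert (Hlam : lam * xs * d = INR c) by (unfold lam; field; lra).
  assert (HT := throughput_identity c lam d x pi Hd Hss).
  destruct Hss as [Hpos [Hsum _]].
  set (EJ := sum1 (fun j => INR j * pi j) c) in *.
  assert (Hlam0 : 0 <= lam).
  { unfold lam, Rdiv. apply Rmult_le_pos; [apply pos_INR | left; apply Rinv_0_lt_compat; nra]. }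
  assert (HR : (lam * (g xs - P) - gp * lam * xs) * sum1 pi c
               + gp * sum1 (fun j => pi j * lam * x j) c <= avg_reward c lam g x pi).
  { unfold avg_reward. rewrite <- (sum1_lin _ _ pi (fun j => pi j * lam * x j)).
    apply sum1_le. intros j Hj.
    assert (0 <= pi j) by (apply Hpos; lia).
    assert (Hl := Hlin j Hj).
    replace ((lam * (g xs - P) - gp * lam * xs) * pi j + gp * (pi j * lam * x j))
      with (pi j * lam * (g xs + gp * (x j - xs) - P)) by ring.
    apply Rmult_le_compat_l; [nra | auto]. }
  rewrite HT in HR. unfold perf_loss.
  assert (0 <= pi 0%nat) by (apply Hpos; lia).
  replace (gp * ((INR c - EJ) / d)) with (gp * lam * xs - gp / d * EJ) in HR
    by (rewrite <- Hlam; field; lra).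
  replace (sum1 pi c) with (1 - pi 0%nat) in HR by lra.
  assert (0 <= gp * lam * xs * pi 0%nat) by (apply Rmult_le_pos; [apply Rmult_le_pos|]; nra).
  assert (0 <= lam * P * pi 0%nat) by (apply Rmult_le_pos; nra).
  lra.
Qed.

Definition two_price_policy (xs dl : R) (tau : nat) : nat -> R :=
  fun j => if Nat.leb j tau then xs * (1 - dl) else xs * (1 + dl).

Lemma two_price_policy_ratio xs dl tau j :
  0 < xs -> two_price_policy xs dl tau j / xs = if Nat.leb j tau then 1 - dl else 1 + dl.
Proof. intros Hxs. unfold two_price_policy. destruct (Nat.leb j tau); field; lra. Qed.

Section TwoPriceSteadyState.

Variables (c tau : nat) (xs d dl : R) (pi : nat -> R).
Hypotheses (Hxs : 0 < xs) (Hd : 0 < d) (Hdl : 0 < dl <= 1 / 2) (Hc : 0 < INR c)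
  (Hss : steady_state c (INR c / (xs * d)) d (two_price_policy xs dl tau) pi).

Lemma pi_nonneg j : (j <= c)%nat -> 0 <= pi j.
Proof. destruct Hss as [Hpos _]. apply Hpos. Qed.

Lemma high_region_growth j : (tau < j <= c)%nat -> (1 + dl) * pi j <= pi (j - 1)%nat.
Proof.
  intros Hj. assert (E := steady_state_balance _ _ _ _ _ j Hxs Hd Hss ltac:(lia)).
  rewrite two_price_policy_ratio in E by auto.
  replace (Nat.leb j tau) with false in E by (symmetry; apply Nat.leb_gt; lia).
  assert (1 <= INR j) by (apply (le_INR 1); lia).
  assert (0 <= pi (j - 1)%nat) by (apply pi_nonneg; lia).
  apply (Rmult_le_reg_l (INR c)); auto. nra.
Qed.

Lemma low_region_decay j :
  INR tau - 1 <= INR c * dl / 2 -> (1 <= j <= tau)%nat -> (tau <= c)%nat ->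
  pi (j - 1)%nat <= (1 - dl / 2) * pi j.
Proof.
  intros Htau Hj Htc. assert (E := steady_state_balance _ _ _ _ _ j Hxs Hd Hss ltac:(lia)).
  rewrite two_price_policy_ratio in E by auto.
  replace (Nat.leb j tau) with true in E by (symmetry; apply Nat.leb_le; lia).
  assert (INR j <= INR tau) by (apply le_INR; lia).
  assert (0 <= pi (j - 1)%nat) by (apply pi_nonneg; lia).
  assert (0 <= pi j) by (apply pi_nonneg; lia).
  assert (Hstep : pi (j - 1)%nat * (INR c * (1 - dl / 2)) <= pi j * (INR c * (1 - dl)))
    by nra.
  assert (0 <= pi j * INR c * dl ^ 2) by (apply Rmult_le_pos; nra).
  assert (pi (j - 1)%nat * (1 - dl / 2) <= pi j * (1 - dl / 2) ^ 2).
  { apply (Rmult_le_reg_l (INR c)); auto. nra. }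
  apply (Rmult_le_reg_r (1 - dl / 2)); [lra|]. nra.
Qed.

Lemma empty_stock_probability :
  2 * ln (INR c) / dl <= INR tau -> INR tau - 1 <= INR c * dl / 2 -> (tau <= c)%nat ->
  pi 0%nat <= / INR c.
Proof.
  intros Hlo Hhi Htc.
  assert (G := geometric_decay pi (1 - dl / 2) tau ltac:(lra)
                 (fun j Hj => low_region_decay j Hhi Hj Htc)).
  assert (Hpt : pi tau <= 1) by (apply (steady_state_le_1 _ _ _ _ _ _ Hss Htc)).
  assert (0 <= pi tau) by (apply pi_nonneg; auto).
  assert (Hq : (1 - dl / 2) ^ tau <= exp (INR tau * - (dl / 2))).
  { rewrite <- exp_pow. apply pow_incr. split; [lra|].
    pose proof (exp_ineq1_le (- (dl / 2))). lra. }
  assert (Hexp : exp (INR tau * - (dl / 2)) <= / INR c).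
  { rewrite <- (exp_ln (INR c)), <- exp_Ropp by lra. apply exp_le.
    assert (2 * ln (INR c) / dl * dl = 2 * ln (INR c)) by (field; lra).
    assert (2 * ln (INR c) / dl * dl <= INR tau * dl) by (apply Rmult_le_compat_r; lra).
    lra. }
  assert (0 <= (1 - dl / 2) ^ tau) by (apply pow_le; lra).
  assert ((1 - dl / 2) ^ tau * pi tau <= (1 - dl / 2) ^ tau) by nra.
  lra.
Qed.

Lemma mean_stock_bound : sum1 (fun j => INR j * pi j) c <= INR tau + / dl.
Proof.
  destruct Hss as [Hpos [Hsum _]].
  assert (Hb := excess_tail_bound c tau dl pi ltac:(lra) Hpos Hsum high_region_growth).
  assert (sum1 (fun j => INR j * pi j) c <=
          INR tau * sum1 pi c + 1 * sum1 (fun j => Rmax 0 (INR j - INR tau) * pi j) c).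
  { rewrite <- sum1_lin. apply sum1_le. intros j Hj.
    assert (0 <= pi j) by (apply Hpos; lia).
    pose proof (Rmax_r 0 (INR j - INR tau)). nra. }
  assert (0 <= pi 0%nat) by (apply Hpos; lia).
  assert (0 <= INR tau) by apply pos_INR.
  nra.
Qed.

End TwoPriceSteadyState.

(* Admissible relative spreads: small enough to stay in the window of Assumption 1
   and large enough for the threshold [2 ln c / dl] to stay below [c dl / 2]. *)
Definition admissible_spread (xs eps C dl : R) : Prop :=
  0 < dl <= 1 / 2 /\ xs * dl <= eps /\ 4 * ln C <= C * dl ^ 2.

Definition two_price_guarantee (c : nat) (xs d : R) (g : R -> R) (bound : R) : Prop :=
  exists x, two_price c x /\ (exists pi, steady_state c (INR c / (xs * d)) d x pi) /\
    forall pi, steady_state c (INR c / (xs * d)) d x pi ->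
      perf_loss c (INR c / (xs * d)) g xs x pi <= bound.

Lemma two_price_guarantee_weaken c xs d g b b' :
  b <= b' -> two_price_guarantee c xs d g b -> two_price_guarantee c xs d g b'.
Proof.
  intros Hb (x & Htp & Hex & Hloss). exists x. split; [auto|split; [auto|]].
  intros pi Hss. eapply Rle_trans; [apply Hloss|]; auto.
Qed.

Lemma penalty_abs alpha k y : penalty alpha k y = penalty alpha k (Rabs y).
Proof. destruct alpha; simpl; auto. rewrite Rabs_Rabsolu; auto. Qed.

Lemma penalty_nonneg alpha k y : 0 <= k -> 0 <= penalty alpha k y.
Proof.
  intros Hk. destruct alpha; simpl; [|lra]. apply Rmult_le_pos; auto.
  unfold rpow0. destruct (Req_EM_T (Rabs y) 0); [lra|]. left; apply exp_pos.
Qed.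

Lemma two_price_policy_window xs eps dl tau j :
  0 < xs -> 0 < dl -> xs * dl <= eps ->
  xs - eps <= two_price_policy xs dl tau j <= xs + eps /\
  Rabs (two_price_policy xs dl tau j - xs) = xs * dl.
Proof.
  intros Hxs Hdl Heps. unfold two_price_policy. destruct (Nat.leb j tau).
  - replace (xs * (1 - dl) - xs) with (- (xs * dl)) by ring.
    rewrite Rabs_Ropp, Rabs_right by nra. split; [nra | auto].
  - replace (xs * (1 + dl) - xs) with (xs * dl) by ring.
    rewrite Rabs_right by nra. split; [nra | auto].
Qed.

Lemma threshold_choice c dl :
  3 <= INR c -> 0 < dl <= 1 / 2 -> 4 * ln (INR c) <= INR c * dl ^ 2 ->
  exists tau : nat, (1 <= tau <= c)%nat /\
    (2 * ln (INR c) / dl <= INR tau <= 2 * ln (INR c) / dl + 1) /\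
    INR tau - 1 <= INR c * dl / 2.
Proof.
  intros Hc Hdl HcL. set (C := INR c) in *. set (L := ln C) in *.
  assert (HL : 1 <= L) by (apply ln_ge1; auto).
  assert (H2L : 0 < 2 * L / dl) by (apply Rdiv_lt_0_compat; lra).
  destruct (nat_ceil (2 * L / dl) ltac:(lra)) as [tau [Ht1 Ht2]].
  assert (Hrat : 2 * L / dl <= C * dl / 2).
  { apply (Rmult_le_reg_r (2 * dl)); [lra|].
    replace (2 * L / dl * (2 * dl)) with (4 * L) by (field; lra).
    replace (C * dl / 2 * (2 * dl)) with (C * dl ^ 2) by (field; lra). lra. }
  exists tau. repeat split; try lra.
  - destruct tau; [simpl in Ht1; lra | lia].
  - apply INR_le; fold C; nra.
Qed.

(* Loss of the two-price policy with threshold [tau]: at most [g xs / (xs d)]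
   (stock-outs) + [lam * penalty] (curvature of [g]) + [g'(xs) / d * (tau + 1 / dl)]
   (idle stock). *)
Lemma two_price_loss xs d g eps alpha k1 gp c dl tau pi :
  0 < xs -> 0 < d -> 0 <= g xs -> assumption1 g xs eps alpha k1 gp ->
  0 < INR c -> 0 < dl <= 1 / 2 -> xs * dl <= eps -> (tau <= c)%nat ->
  2 * ln (INR c) / dl <= INR tau <= 2 * ln (INR c) / dl + 1 ->
  INR tau - 1 <= INR c * dl / 2 ->
  steady_state c (INR c / (xs * d)) d (two_price_policy xs dl tau) pi ->
  perf_loss c (INR c / (xs * d)) g xs (two_price_policy xs dl tau) pi <=
    g xs / (xs * d) + INR c / (xs * d) * penalty alpha k1 (xs * dl)
    + gp / d * (2 * ln (INR c) / dl + 1 + / dl).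
Proof.
  intros Hxs Hd Hgx (_ & _ & _ & Hk1 & Hgp & _ & Hlow) Hc Hdl Hdle Htc Htau Hhalf Hss.
  set (P := penalty alpha k1 (xs * dl)).
  assert (HP : 0 <= P) by (apply penalty_nonneg; auto).
  assert (Hlin : forall j, (1 <= j <= c)%nat ->
            g xs + gp * (two_price_policy xs dl tau j - xs) - P
            <= g (two_price_policy xs dl tau j)).
  { intros j _. destruct (two_price_policy_window xs eps dl tau j) as [Hw Habs]; [lra..|].
    unfold P. rewrite <- Habs, <- penalty_abs. apply Hlow, Hw. }
  assert (Hdec := loss_decomposition _ _ _ _ _ _ _ _ Hxs Hd Hgp HP Hgx Hss Hlin).
  assert (Hpi0 : pi 0%nat <= / INR c)
    by (apply (empty_stock_probability c tau xs d dl pi); auto; lra).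
  assert (HEJ := mean_stock_bound c tau xs d dl pi Hxs Hd Hdl Hc Hss).
  assert (0 <= pi 0%nat) by (destruct Hss as [Hpos _]; apply Hpos; lia).
  assert (Hempty : INR c / (xs * d) * g xs * pi 0%nat <= g xs / (xs * d)).
  { apply Rle_trans with (INR c / (xs * d) * g xs * / INR c).
    - apply Rmult_le_compat_l; [apply Rmult_le_pos; [apply Rlt_le, Rdiv_lt_0_compat|]; nra | auto].
    - right; field; repeat split; lra. }
  assert (Hgd : 0 <= gp / d).
  { unfold Rdiv; apply Rmult_le_pos; [lra | left; apply Rinv_0_lt_compat; lra]. }
  assert (gp / d * sum1 (fun j => INR j * pi j) c <= gp / d * (2 * ln (INR c) / dl + 1 + / dl))
    by (apply Rmult_le_compat_l; lra).
  lra.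
Qed.

Lemma two_price_performance xs d g eps alpha k1 gp c dl :
  0 < xs < 1 -> 0 < d -> 0 <= g xs -> assumption1 g xs eps alpha k1 gp ->
  3 <= INR c -> admissible_spread xs eps (INR c) dl ->
  two_price_guarantee c xs d g
    (g xs / (xs * d) + INR c / (xs * d) * penalty alpha k1 (xs * dl)
     + gp / d * (2 * ln (INR c) / dl + 1 + / dl)).
Proof.
  intros Hxs Hd Hgx HA Hc (Hdl & Hdle & HcL).
  pose proof HA as (_ & Hepsm & _).
  assert (Hem : xs * dl < 1 - xs) by (pose proof (Rmin_r xs (1 - xs)); lra).
  destruct (threshold_choice c dl Hc Hdl HcL) as (tau & Htc & Htau & Hhalf).
  exists (two_price_policy xs dl tau). split; [|split].
  - exists (xs * (1 - dl)), (xs * (1 + dl)), tau. repeat split; try nra; try apply Htc.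
  - apply steady_state_exists; [apply Rdiv_lt_0_compat; nra | auto |].
    intros j _. unfold two_price_policy. destruct (Nat.leb j tau); nra.
  - intros pi Hss.
    apply (two_price_loss xs d g eps alpha k1 gp c dl tau pi); try apply Htc; auto; lra.
Qed.

Definition rate (alpha : option R) (C : R) : R :=
  match alpha with Some a => Rpower C (1 / (a + 1)) | None => 1 end.

Lemma loss_bound_rate alpha K c :
  loss_bound alpha K c = K * rate alpha (INR c) * ln (INR c) ^ 2.
Proof. destruct alpha; simpl; ring. Qed.

Lemma rate_ge_1 alpha C : alpha_ok alpha -> 1 <= C -> 1 <= rate alpha C.
Proof.
  destruct alpha as [a|]; simpl; intros Ha HC; [|lra].
  apply Rle_trans with (Rpower C 0); [rewrite Rpower_O; lra|].
  apply Rle_Rpower; [lra|]. apply Rlt_le, Rdiv_lt_0_compat; lra.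
Qed.

Lemma Rpower_interpolate C v e :
  0 < C -> 1 <= v -> 0 <= e <= 1 -> C * Rpower (v / C) (1 - e) <= v * Rpower C e.
Proof.
  intros HC Hv He. unfold Rpower, Rdiv.
  rewrite ln_mult, ln_Rinv by (try apply Rinv_0_lt_compat; lra).
  rewrite <- (exp_ln C) at 1 by lra. rewrite <- (exp_ln v) at 2 by lra.
  rewrite <- !exp_plus. apply exp_le.
  assert (0 <= ln v) by (rewrite <- ln_1; apply ln_le_mono; lra). nra.
Qed.

Lemma base_spread xs eps : 0 < xs -> 0 < eps -> exists d0, 0 < d0 <= 1 / 2 /\ xs * d0 <= eps.
Proof.
  intros Hxs Heps. exists (Rmin (eps / xs) (1 / 2)).
  assert (0 < eps / xs) by (apply Rdiv_lt_0_compat; auto).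
  split; [split; [apply Rmin_glb_lt | apply Rmin_r]; lra|].
  apply Rle_trans with (xs * (eps / xs)); [apply Rmult_le_compat_l; [lra | apply Rmin_l]|].
  right; field; lra.
Qed.

Definition good_spread_schedule (xs d eps : R) (alpha : option R) (k1 : R) : Prop :=
  exists M Q c0 : R, 0 <= M /\ 0 <= Q /\
    forall C, c0 <= C -> 3 <= C /\ exists dl, admissible_spread xs eps C dl /\
      / dl <= M * rate alpha C /\
      C / (xs * d) * penalty alpha k1 (xs * dl) <= 4 * Q * ln C * rate alpha C.

(* For [alpha = infinity] a constant spread works. *)
Lemma spread_schedule_infinite xs d eps k1 :
  0 < xs -> 0 < eps -> good_spread_schedule xs d eps None k1.
Proof.
  intros Hxs Heps. destruct (base_spread xs eps Hxs Heps) as (d0 & Hd0 & Hd0e).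
  exists (/ d0), 0, (Rmax 3 ((8 / d0 ^ 2) ^ 2)).
  split; [left; apply Rinv_0_lt_compat; lra | split; [lra|]].
  intros C HC. destruct (log_ratio_small (d0 ^ 2) C ltac:(nra) HC) as [HC3 Hu].
  split; [auto|]. exists d0. simpl. repeat split; try lra.
  apply (Rmult_le_reg_r (/ C)); [apply Rinv_0_lt_compat; lra|].
  replace (C * d0 ^ 2 * / C) with (d0 ^ 2) by (field; lra). exact Hu.
Qed.

Lemma power_spread_bounds C a :
  3 <= C -> 1 <= a -> 4 * ln C / C <= 1 ->
  4 * ln C <= C * Rpower (4 * ln C / C) (1 / (a + 1)) ^ 2 /\
  / Rpower (4 * ln C / C) (1 / (a + 1)) <= Rpower C (1 / (a + 1)) /\
  C * Rpower (Rpower (4 * ln C / C) (1 / (a + 1))) a <= 4 * ln C * Rpower C (1 / (a + 1)).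
Proof.
  intros HC3 Ha Hu1. set (L := ln C) in *. set (u := 4 * L / C) in *.
  set (e := 1 / (a + 1)).
  assert (He : 0 < e <= 1 / 2).
  { unfold e; split; [apply Rdiv_lt_0_compat|]; [lra..|].
    apply Rmult_le_compat_l; [|apply Rinv_le_contravar]; lra. }
  assert (Hea : e * a = 1 - e) by (unfold e; field; lra).
  clearbody e.
  assert (HL : 1 <= L) by (apply ln_ge1; auto).
  assert (Hu0 : 0 < u) by (apply Rdiv_lt_0_compat; lra).
  assert (Hdl : 0 < Rpower u e) by apply exp_pos.
  split; [|split].
  - assert (u <= Rpower u e ^ 2).
    { rewrite <- Rpower_pow, Rpower_mult by auto. rewrite <- (Rpower_1 u) at 1 by auto.
      apply Rpower_le_small_base; simpl; lra. }
    replace (4 * L) with (C * u) by (unfold u; field; lra). nra.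
  - rewrite <- Rpower_inv_base by auto.
    apply Rle_Rpower_l; [lra|]. split; [apply Rinv_0_lt_compat; auto|].
    unfold u. rewrite Rinv_div. apply (Rmult_le_reg_r (4 * L)); [lra|].
    replace (C / (4 * L) * (4 * L)) with C by (field; lra). nra.
  - rewrite Rpower_mult, Hea. apply Rpower_interpolate; lra.
Qed.

(* For finite [alpha] the spread [dl = (4 ln C / C)^(1/(alpha+1))] balances the
   curvature loss against the idle-stock loss. *)
Lemma spread_schedule_finite xs d eps a k1 :
  0 < xs -> 0 < d -> 0 < eps -> 1 <= a -> 0 <= k1 -> good_spread_schedule xs d eps (Some a) k1.
Proof.
  intros Hxs Hd Heps Ha Hk1. destruct (base_spread xs eps Hxs Heps) as (d0 & Hd0 & Hd0e).
  set (m := Rpower d0 (a + 1)).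
  assert (Hm : 0 < m) by apply exp_pos.
  assert (Hm1 : m <= 1).
  { apply Rle_trans with (Rpower d0 0); [apply Rpower_le_small_base; lra | rewrite Rpower_O; lra]. }
  set (Q := k1 * Rpower xs a / (xs * d)).
  assert (HQ : 0 <= Q).
  { unfold Q, Rdiv. apply Rmult_le_pos; [apply Rmult_le_pos; [lra | left; apply exp_pos]|].
    left; apply Rinv_0_lt_compat; nra. }
  exists 1, Q, (Rmax 3 ((8 / m) ^ 2)). split; [lra | split; [auto|]].
  intros C HC. destruct (log_ratio_small m C Hm HC) as [HC3 Hu].
  destruct (power_spread_bounds C a HC3 Ha ltac:(lra)) as (Hfit & Hinv & Hcurv).
  set (dl := Rpower (4 * ln C / C) (1 / (a + 1))) in *.
  assert (Hdl : 0 < dl) by apply exp_pos.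
  assert (Hdld0 : dl <= d0).
  { replace d0 with (Rpower m (1 / (a + 1))).
    - assert (0 < 4 * ln C / C) by (apply Rdiv_lt_0_compat; pose proof (ln_ge1 C HC3); lra).
      apply Rle_Rpower_l; [apply Rlt_le, Rdiv_lt_0_compat|]; lra.
    - unfold m. rewrite Rpower_mult. replace ((a + 1) * (1 / (a + 1))) with 1 by (field; lra).
      apply Rpower_1; lra. }
  split; [auto|]. exists dl. simpl rate.
  repeat split; try nra.
  simpl. unfold rpow0. rewrite Rabs_right by nra.
  destruct (Req_EM_T (xs * dl) 0) as [Hz|_]; [nra|].
  rewrite <- Rpower_mult_distr by lra.
  replace (C / (xs * d) * (k1 * (Rpower xs a * Rpower dl a))) with (Q * (C * Rpower dl a))
    by (unfold Q; field; nra).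
  replace (4 * Q * ln C * Rpower C (1 / (a + 1)))
    with (Q * (4 * ln C * Rpower C (1 / (a + 1)))) by ring.
  apply Rmult_le_compat_l; auto.
Qed.

Lemma spread_schedule xs d eps alpha k1 :
  0 < xs -> 0 < d -> 0 < eps -> alpha_ok alpha -> 0 <= k1 -> good_spread_schedule xs d eps alpha k1.
Proof.
  destruct alpha as [a|]; intros.
  - apply spread_schedule_finite; auto.
  - apply spread_schedule_infinite; auto.
Qed.

Lemma polylog_absorb A B Q M r L e p :
  0 <= A -> 0 <= B -> 0 <= Q -> 0 <= M -> 1 <= r -> 1 <= L -> 0 <= e <= M * r ->
  p <= 4 * Q * L * r ->
  A + p + B * (2 * L * e + 1 + e) <= (A + 4 * Q + B * (3 * M + 1) + 1) * r * L ^ 2.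
Proof.
  intros HA HB HQ HM Hr HL He Hp.
  set (s := r * L ^ 2).
  assert (0 <= r * (L * (L - 1))) by (apply Rmult_le_pos; nra).
  assert (HLs : L * r <= s) by (unfold s; simpl; nra).
  assert (Hs : 1 <= s) by (apply Rle_trans with (L * r); nra).
  assert (HLe : L * e <= M * s) by (apply Rle_trans with (L * (M * r)); nra).
  assert (A <= A * s) by nra.
  assert (4 * Q * L * r <= 4 * Q * s) by nra.
  assert (Hrs : r <= s) by nra.
  assert (Hes : e <= M * s) by (apply Rle_trans with (M * r); [lra | apply Rmult_le_compat_l; lra]).
  assert (B * e <= B * M * s) by (rewrite Rmult_assoc; apply Rmult_le_compat_l; lra).
  assert (B * (L * e) <= B * M * s) by (rewrite Rmult_assoc; apply Rmult_le_compat_l; lra).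
  assert (B <= B * s) by nra.
  replace ((A + 4 * Q + B * (3 * M + 1) + 1) * r * L ^ 2)
    with (A * s + 4 * Q * s + 2 * (B * M * s) + B * M * s + B * s + s) by (unfold s; ring).
  nra.
Qed.

Theorem theorem2 (xs d : R) (g : R -> R) (eps : R) (alpha : option R) (k1 gp : R) :
  0 < xs < 1 -> 0 < d ->
  concave_on01 g -> nondecr_on01 g -> g 0 = 0 ->
  assumption1 g xs eps alpha k1 gp -> 0 < gp ->
  exists K c0 : R, 0 < K /\
    forall c : nat, c0 <= INR c -> (1 <= c)%nat ->
      let lam := INR c / (xs * d) in
      exists x : nat -> R, two_price c x /\
        (exists pi, steady_state c lam d x pi) /\
        forall pi, steady_state c lam d x pi ->
          perf_loss c lam g xs x pi <= loss_bound alpha K c.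
Proof.
  intros Hxs Hd _ Hmono Hg0 HA _.
  pose proof HA as (Heps & _ & Hal & Hk1 & Hgp & _).
  destruct (spread_schedule xs d eps alpha k1) as (M & Q & c0 & HM & HQ & Hsched); try lra; auto.
  set (A := g xs / (xs * d)). set (B := gp / d).
  assert (Hgx : 0 <= g xs) by (rewrite <- Hg0; apply Hmono; lra).
  assert (HA0 : 0 <= A).
  { unfold A, Rdiv. apply Rmult_le_pos; [auto | left; apply Rinv_0_lt_compat; nra]. }
  assert (HB : 0 <= B).
  { unfold B, Rdiv. apply Rmult_le_pos; [lra | left; apply Rinv_0_lt_compat; lra]. }
  exists (A + 4 * Q + B * (3 * M + 1) + 1), c0. split; [nra|].
  intros c Hc _ lam.
  change (two_price_guarantee c xs d g (loss_bound alpha (A + 4 * Q + B * (3 * M + 1) + 1) c)).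
  destruct (Hsched (INR c) Hc) as (HC3 & dl & Hadm & Hinv & Hpen).
  eapply two_price_guarantee_weaken;
    [|exact (two_price_performance xs d g eps alpha k1 gp c dl Hxs Hd Hgx HA HC3 Hadm)].
  rewrite loss_bound_rate. fold A B.
  destruct Hadm as (Hdl & _).
  apply polylog_absorb; auto.
  - apply rate_ge_1; [auto | lra].
  - apply ln_ge1; auto.
  - split; [left; apply Rinv_0_lt_compat|]; lra.
Qed.
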